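(* For every function \(f \colon [0,\infty) \to [0,\infty)\) the following conditions are equivalent: (i) \(f\) is increasing (i.e. \(a \geq b\) implies \(f(a) \geq f(b)\) for all \(a,b \geq 0\)) and \(f(0)=0\); (ii) \(f\) is pseudoultrametric-preserving; (iii) \(f\) is ultrametric-pseudoultrametric-preserving.
   Context: A pseudoultrametric on a set \(X\) is a symmetric function \(d\colon X\times X\to[0,\infty)\) with \(d(x,x)=0\) for all \(x\in X\) and satisfying the strong triangle inequality \(d(x,y)\le \max\{d(x,z),d(z,y)\}\) for all \(x,y,z\in X\) (distinct points may have distance zero). An ultrametric is a pseudoultrametric with \(d(x,y)=0\) only if \(x=y\). A function \(f\colon[0,\infty)\to[0,\infty)\) is pseudoultrametric-preserving if \(f\circ d\) is a pseudoultrametric for every pseudoultrametric space \((X,d)\), and ultrametric-pseudoultrametric-preserving if \(f\circ d\) is a pseudoultrametric for every ultrametric space \((X,d)\). *)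

From Stdlib Require Import Reals.
Open Scope R_scope.

Definition is_pseudoultrametric {X : Type} (d : X -> X -> R) : Prop :=
  (forall x y, 0 <= d x y) /\
  (forall x, d x x = 0) /\
  (forall x y, d x y = d y x) /\
  (forall x y z, d x y <= Rmax (d x z) (d z y)).

Definition is_ultrametric {X : Type} (d : X -> X -> R) : Prop :=
  is_pseudoultrametric d /\ (forall x y, d x y = 0 -> x = y).

(* f : [0,oo) -> [0,oo) is represented by f : R -> R with
   f mapping [0,oo) into [0,oo); only its values on [0,oo) are relevant. *)
Definition maps_nonneg (f : R -> R) : Prop := forall x, 0 <= x -> 0 <= f x.

Definition pseudoultrametric_preserving (f : R -> R) : Prop :=
  forall (X : Type) (d : X -> X -> R),
    is_pseudoultrametric d -> is_pseudoultrametric (fun x y => f (d x y)).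

Definition ultrametric_pseudoultrametric_preserving (f : R -> R) : Prop :=
  forall (X : Type) (d : X -> X -> R),
    is_ultrametric d -> is_pseudoultrametric (fun x y => f (d x y)).

Definition increasing_nonneg (f : R -> R) : Prop :=
  forall a b, 0 <= b -> b <= a -> f b <= f a.

(* An increasing f with f 0 = 0 commutes with max on [0,oo), so it carries the
   strong triangle inequality over to f o d.  Conversely, f 0 = 0 is forced by a
   one-point space, and f b <= f a for 0 < b <= a is forced by the isosceles
   three-point ultrametric space with sides b, a, a. *)
From Stdlib Require Import Reals Lra.
Open Scope R_scope.

Lemma increasing_nonneg_le_Rmax (f : R -> R) (a b x : R) :
  increasing_nonneg f -> 0 <= a -> 0 <= b -> 0 <= x -> x <= Rmax a b ->
  f x <= Rmax (f a) (f b).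
Proof.
  intros Hf Ha Hb Hx Hxab.
  destruct (proj1 (Rmax_Rle a b x) Hxab) as [Hxa | Hxb].
  - apply Rle_trans with (f a); [now apply Hf | apply Rmax_l].
  - apply Rle_trans with (f b); [now apply Hf | apply Rmax_r].
Qed.

Lemma pseudoultrametric_preserving_of_increasing (f : R -> R) :
  maps_nonneg f -> increasing_nonneg f -> f 0 = 0 ->
  pseudoultrametric_preserving f.
Proof.
  intros Hnonneg Hincr Hf0 X d (Hd_nonneg & Hd_refl & Hd_sym & Hd_tri).
  repeat split.
  - intros x y; apply Hnonneg, Hd_nonneg.
  - intros x; rewrite Hd_refl; exact Hf0.
  - intros x y; rewrite Hd_sym; reflexivity.
  - intros x y z; apply increasing_nonneg_le_Rmax; auto.
Qed.

Lemma ultrametric_pseudoultrametric_preserving_of_pseudoultrametric_preserving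
  (f : R -> R) :
  pseudoultrametric_preserving f -> ultrametric_pseudoultrametric_preserving f.
Proof. intros Hf X d [Hd _]; exact (Hf X d Hd). Qed.

Lemma is_ultrametric_unit : is_ultrametric (fun _ _ : unit => 0).
Proof.
  repeat split; intros; try lra.
  - apply Rmax_l.
  - destruct x, y; reflexivity.
Qed.

Lemma ultrametric_pseudoultrametric_preserving_at0 (f : R -> R) :
  ultrametric_pseudoultrametric_preserving f -> f 0 = 0.
Proof.
  intros Hf.
  destruct (Hf unit _ is_ultrametric_unit) as (_ & Hrefl & _).
  exact (Hrefl tt).
Qed.

Inductive triangle := A | B | C.

Definition isosceles_dist (a b : R) (x y : triangle) : R :=
  match x, y with
  | A, A | B, B | C, C => 0
  | A, B | B, A => b
  | _, _ => a
  end.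

Lemma is_ultrametric_isosceles_dist (a b : R) :
  0 < b -> b <= a -> is_ultrametric (isosceles_dist a b).
Proof.
  intros Hb Hba; repeat split.
  - intros [] []; simpl; lra.
  - intros []; reflexivity.
  - intros [] []; reflexivity.
  - intros [] [] []; simpl; unfold Rmax; destruct Rle_dec; lra.
  - intros [] [] Hxy; simpl in Hxy; try reflexivity; lra.
Qed.

Lemma ultrametric_pseudoultrametric_preserving_increasing (f : R -> R) :
  maps_nonneg f -> ultrametric_pseudoultrametric_preserving f ->
  increasing_nonneg f.
Proof.
  intros Hnonneg Hf a b Hb Hba.
  destruct (Req_dec b 0) as [-> | Hb0].
  { rewrite (ultrametric_pseudoultrametric_preserving_at0 f Hf).
    apply Hnonneg; lra. }
  destruct (Hf triangle _ (is_ultrametric_isosceles_dist a b ltac:(lra) Hba))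
    as (_ & _ & _ & Htri).
  specialize (Htri A B C); simpl in Htri.
  destruct (proj1 (Rmax_Rle _ _ _) Htri); assumption.
Qed.

Theorem proposition2p4 (f : R -> R) (hf : maps_nonneg f) :
  (increasing_nonneg f /\ f 0 = 0 <-> pseudoultrametric_preserving f) /\
  (pseudoultrametric_preserving f <-> ultrametric_pseudoultrametric_preserving f).
Proof.
  pose proof (pseudoultrametric_preserving_of_increasing f hf) as H12.
  pose proof
    (ultrametric_pseudoultrametric_preserving_of_pseudoultrametric_preserving f)
    as H23.
  assert (H31 : ultrametric_pseudoultrametric_preserving f ->
                increasing_nonneg f /\ f 0 = 0).
  { intros Hf; split.
    - exact (ultrametric_pseudoultrametric_preserving_increasing f hf Hf).
    - exact (ultrametric_pseudoultrametric_preserving_at0 f Hf). }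
  tauto.
Qed.
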